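(* Let $(X,d)$ be a separable complete metric space, $(\Omega,\mathsf{F},\mathbb{P})$ a probability space, and $\mathcal{F}$ a sub-$\sigma$-algebra of $\mathsf{F}$. Let $\phi:X\times X\to[0,\infty)$ be a Carath\'eodory distance and let $S\subseteq X$ be a non-empty Borel set. Then for every $\mathcal{F}$-measurable $X$-valued random variable $x$ and every $\varepsilon>0$ there exists an $\mathcal{F}$-measurable $X$-valued random variable $s$ such that $s\in S$ almost surely and $\mathbb{E}[\phi(s,x)]\le\mathbb{E}[\mathrm{dist}^\phi_S(x)]+\varepsilon$.
   Context: A Carath\'eodory distance is a function $\phi:X\times X\to[0,\infty)$ continuous in its left argument and Borel measurable in its right argument. $\mathrm{dist}^\phi_S(x):=\inf_{s\in S}\phi(s,x)$. *)

From HB Require Import structures.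
From mathcomp Require Import all_boot all_order all_algebra.
From mathcomp Require Import all_classical all_reals all_analysis.
Set Implicit Arguments. Unset Strict Implicit. Unset Printing Implicit Defensive.
Import Order.TTheory GRing.Theory Num.Theory numFieldTopology.Exports numFieldNormedType.Exports.
Local Open Scope classical_set_scope.
Local Open Scope ring_scope.

Definition borel_sets (X : topologicalType) : set (set X) := <<s open >>.

Definition separable_space (X : topologicalType) : Prop :=
  exists D : set X, countable D /\ closure D = setT.

Definition measurable_wrt (Omega : Type) (X : topologicalType)
  (F : set (set Omega)) (f : Omega -> X) : Prop :=
  forall B : set X, borel_sets B -> F (f @^-1` B).

Definition caratheodory_distance (R : realType) (X : topologicalType)
  (phi : X -> X -> R) : Prop :=
  (forall s x, 0 <= phi s x) /\
  (forall x, continuous (fun s => phi s x)) /\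
  (forall s (B : set R), measurable B -> borel_sets ((fun x => phi s x) @^-1` B)).

Definition dist_phi (R : realType) (X : Type) (phi : X -> X -> R) (S : set X)
  (x : X) : \bar R :=
  ereal_inf [set (phi s x)%:E | s in S].

From HB Require Import structures.
From mathcomp Require Import all_boot all_order all_algebra.
From mathcomp Require Import all_classical all_reals all_analysis.
From mathcomp Require Import measurable_realfun.
Import Order.TTheory GRing.Theory Num.Theory numFieldTopology.Exports numFieldNormedType.Exports.
Local Open Scope classical_set_scope.
Local Open Scope ring_scope.

(* Since phi is continuous in its first argument, the infimum of phi(., y) over S is
   already the infimum over a dense sequence (t_n) of S, which exists by separability.
   Choosing for each w the first n with phi(t_n, x w) < dist(x w) + eps gives an index
   N w that is F-measurable, because it is defined through countably many F-measurable
   events; s := t_N is then an F-measurable selection of S, and integrating the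
   pointwise bound yields the estimate. *)

Lemma separable_dense_seq {X : topologicalType} (x0 : X) :
  separable_space X -> exists f : nat -> X, closure (range f) = setT.
Proof.
case=> D [/countable_injP[g ginj] clD].
exists (fun n => xget x0 [set z | D z /\ g z = n]).
apply/seteqP; split=> // z _; have : closure D z by rewrite clD.
apply: closureS => {}z Dz.
exists (g z) => //.
have [Dz' gz'] : [set z' | D z' /\ g z' = g z] (xget x0 [set z' | D z' /\ g z' = g z]).
  by apply: xgetPex; exists z.
by apply: ginj; rewrite ?inE.
Qed.

Lemma separable_dense_seq_in {R : realType} {X : pseudoMetricType R} {S : set X} :
  separable_space X -> S !=set0 ->
  exists T : nat -> X, range T `<=` S /\ S `<=` closure (range T).
Proof.
move=> sepX [s0 Ss0]; have [f clf] := separable_dense_seq s0 sepX.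
(* T enumerates one point of S in each ball B(f k, 1/(m+1)) that meets S. *)
pose pick k m := xget s0 (S `&` ball (f k) m.+1%:R^-1).
pose T n := if unpickle n is Some (k, m) then pick k m else s0.
exists T; split.
  move=> _ [n _ <-]; rewrite /T; case: unpickle => [[k m]|] //=.
  by rewrite /pick; case: xgetP => // ? _ [].
move=> z Sz B /nbhs_ballP[e e0 zeB].
have e20 : 0 < e / 2 by rewrite divr_gt0.
have [m _ /(_ m (leqnn m)) /= me] := near_infty_natSinv_lt (PosNum e20).
have r0 : 0 < m.+1%:R^-1 :> R by rewrite invr_gt0 ltr0n.
have [_ [[k _ <-] fkz]] : range f `&` ball z m.+1%:R^-1 !=set0.
  have : closure (range f) z by rewrite clf.
  by apply; exact: nbhsx_ballx.
have [_ zt] : (S `&` ball (f k) m.+1%:R^-1) (pick k m).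
  by apply: xgetPex; exists z; split => //; exact: ball_sym.
exists (pick k m); split; first by exists (pickle (k, m)) => //; rewrite /T pickleK.
apply: zeB; apply: le_ball (ball_triangle fkz zt).
by rewrite (splitr e) lerD // ltW.
Qed.

Lemma ereal_inf_dense {R : realType} {X : topologicalType} {S D : set X} {g : X -> R} :
  D `<=` S -> S `<=` closure D -> (forall z, S z -> {for z, continuous g}) ->
  ereal_inf [set (g s)%:E | s in S] = ereal_inf [set (g s)%:E | s in D].
Proof.
move=> DS SD gc; apply/eqP; rewrite eq_le; apply/andP; split.
  by apply: ereal_inf_le_tmp => _ [t Dt <-]; exists t => //; exact: DS.
apply: le_ereal_inf_tmp => _ [z Sz <-]; apply/lee_addgt0Pr => del del0.
have /SD /(_ _ (gc z Sz _ (nbhsx_ballx (g z) del del0))) [t [Dt gzt]] := Sz.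
apply: ge_ereal_inf; exists (g t)%:E; first by exists t.
by move: gzt; rewrite /= /ball /= lee_fin ltr_distlC => /andP[_ /ltW].
Qed.

Section measurable_selection.
Context {d} {T : measurableType d}.

Lemma measurable_first_index (A : nat -> set T) :
  (forall n, measurable (A n)) -> (forall w, exists n, A n w) ->
  exists2 N : T -> nat, measurable_fun setT N & forall w, A (N w) w.
Proof.
move=> mA covA.
have exA w : exists n, `[< A n w >] by have [n An] := covA w; exists n; exact/asboolP.
exists (fun w => ex_minn (exA w)); last by move=> w; case: ex_minnP => n /asboolP.
move=> _ B _; rewrite setTI.
suff -> : (fun w => ex_minn (exA w)) @^-1` B =
    \bigcup_(n in B) (A n `&` \bigcap_(k in [set k | (k < n)%N]) ~` A k).
  apply: bigcup_measurable => n _; apply: measurableI => //.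
  by apply: bigcap_measurableType => k _; exact: measurableC.
apply/seteqP; split => w /=.
  case: ex_minnP => n /asboolP An nmin Bn; exists n => //; split => // k kn Ak.
  by have := nmin k (asboolT Ak); rewrite leqNgt kn.
move=> [n Bn [An nmin]]; case: ex_minnP => m /asboolP Am mmin.
suff -> : m = n by [].
apply/eqP; rewrite eqn_leq mmin ?asboolT //= leqNgt; apply/negP => nm.
exact: nmin _ nm Am.
Qed.

Lemma measurable_fun_index {d'} {Y : measurableType d'} {N : T -> nat}
    (h : nat -> T -> Y) :
  measurable_fun setT N -> (forall n, measurable_fun setT (h n)) ->
  measurable_fun setT (fun w => h (N w) w).
Proof.
move=> mN mh _ B mB; rewrite setTI.
suff -> : (fun w => h (N w) w) @^-1` B = \bigcup_n (N @^-1` [set n] `&` h n @^-1` B).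
  apply: bigcupT_measurable => n; apply: measurableI.
  - by have := mN measurableT [set n] I; rewrite setTI.
  - by have := mh n measurableT B mB; rewrite setTI.
apply/seteqP; split => w; first by exists (N w).
by move=> [n _ [/= <-]].
Qed.

Lemma measurable_fun_ereal_inf_seq {R : realType} (f : nat -> T -> \bar R) :
  (forall n, measurable_fun setT (f n)) ->
  measurable_fun setT (fun w => ereal_inf (range (f ^~ w))).
Proof.
move=> mf; have -> : (fun w => ereal_inf (range (f ^~ w))) = fun w => einfs (f ^~ w) 0.
  apply/funext => w; rewrite /einfs; congr ereal_inf.
  by apply/seteqP; split => _ [n _ <-]; exists n.
exact: measurable_fun_einfs.
Qed.

Lemma measurable_approx_arginf {R : realType} {g : nat -> T -> R} {eps : R} :
  (forall n, measurable_fun setT (g n)) -> (forall n w, 0 <= g n w) -> 0 < eps ->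
  exists2 N : T -> nat, measurable_fun setT N &
    forall w, ((g (N w) w)%:E < ereal_inf (range (fun n => (g n w)%:E)) + eps%:E)%E.
Proof.
move=> mg g0 eps0; pose G w := ereal_inf (range (fun n => (g n w)%:E)).
have mEg n : measurable_fun setT (fun w => (g n w)%:E) by exact/measurable_EFinP.
apply: (@measurable_first_index (fun n => [set w | (g n w)%:E < G w + eps%:E]%E)).
  move=> n; rewrite -[X in measurable X]setTI; apply: measurable_lte => //.
  apply: emeasurable_funD => //.
  exact: (measurable_fun_ereal_inf_seq (fun n w => (g n w)%:E) mEg).
move=> w; have Gfin : G w \is a fin_num.
  rewrite ge0_fin_numE; last by apply: le_ereal_inf_tmp => _ [n _ <-]; rewrite lee_fin.
  by apply: le_lt_trans (ltry (g 0%N w)); apply: ereal_inf_lbound; exists 0%N.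
by have [_ [n _ <-] ?] := lb_ereal_inf_adherent eps0 Gfin; exists n.
Qed.

Lemma le_integral_addr_cst (R : realType) (P : probability T R) (f h : T -> \bar R)
    (eps : R) :
  measurable_fun setT f -> measurable_fun setT h ->
  (forall w, 0 <= f w)%E -> (forall w, 0 <= h w)%E -> 0 <= eps ->
  (forall w, f w <= h w + eps%:E)%E ->
  (\int[P]_w f w <= \int[P]_w h w + eps%:E)%E.
Proof.
move=> mf mh f0 h0 eps0 fh.
rewrite -[eps%:E]mule1 -(probability_setT P) -integral_cst // -ge0_integralD //.
by apply: ge0_le_integral => //; exact: emeasurable_funD.
Qed.

End measurable_selection.

Lemma measurable_fun_g_sigma_sub {d} {Omega : measurableType d} {F : set (set Omega)}
    {d'} {Y : measurableType d'} {f : Omega -> Y} :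
  F `<=` measurable -> measurable_fun (setT : set (g_sigma_algebraType F)) f ->
  measurable_fun (setT : set Omega) f.
Proof.
move=> Fm mf _ B mB; rewrite setTI.
have := mf measurableT B mB; rewrite setTI.
exact: (smallest_sub (sigma_algebra_measurable Omega) Fm).
Qed.

Lemma measurable_wrt_comp {d} {Omega : measurableType d} {F : set (set Omega)}
    {X : topologicalType} {d'} {Y : measurableType d'} {x : Omega -> X} {k : X -> Y} :
  measurable_wrt F x -> (forall B, measurable B -> borel_sets (k @^-1` B)) ->
  measurable_fun (setT : set (g_sigma_algebraType F)) (k \o x).
Proof.
by move=> mx mk _ B mB; rewrite setTI; apply: sub_gen_smallest; exact: mx (mk _ mB).
Qed.

Theorem corollary2p11 (R : realType) (X : completePseudoMetricType R)
  (d : measure_display) (Omega : measurableType d) (P : probability Omega R)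
  (F : set (set Omega))
  (hX2 : hausdorff_space X) (hXsep : separable_space X)
  (hF : sigma_algebra setT F) (hFsub : F `<=` measurable)
  (phi : X -> X -> R) (hphi : caratheodory_distance phi)
  (S : set X) (hS : borel_sets S) (hS0 : S !=set0)
  (x : Omega -> X) (hx : measurable_wrt F x)
  (eps : R) (heps : 0 < eps) :
  exists s : Omega -> X,
    [/\ measurable_wrt F s,
        {ae P, forall w, S (s w)} &
        (\int[P]_w (phi (s w) (x w))%:E
           <= \int[P]_w dist_phi phi S (x w) + eps%:E)%E].
Proof.
case: hphi => phi0 [phic phim].
have [T [TS ST]] := separable_dense_seq_in hXsep hS0.
pose g n (w : g_sigma_algebraType F) := phi (T n) (x w).
have mg n : measurable_fun setT (g n) := measurable_wrt_comp hx (phim (T n)).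
have mEg n : measurable_fun setT (fun w => (g n w)%:E) by exact/measurable_EFinP.
have distE : (fun w => dist_phi phi S (x w)) =
    fun w => ereal_inf (range (fun n => (g n w)%:E)).
  apply/funext => w; rewrite /dist_phi (ereal_inf_dense TS ST) ?image_comp //.
  by move=> z _; exact: phic.
have [N mN gN] := measurable_approx_arginf mg (fun n w => phi0 _ _) heps.
exists (fun w => T (N w)); split.
- move=> B _; rewrite -(measurable_g_measurableTypeE hF).
  by have := mN measurableT (T @^-1` B) I; rewrite setTI.
- by apply: aeW => w; apply: TS; exists (N w).
rewrite distE.
apply: le_integral_addr_cst (ltW heps) _ => [||w|w|w].
- apply: measurable_fun_g_sigma_sub hFsub _.
  exact: (measurable_fun_index (fun n w => (g n w)%:E) mN mEg).
- apply: measurable_fun_g_sigma_sub hFsub _.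
  exact: (measurable_fun_ereal_inf_seq (fun n w => (g n w)%:E) mEg).
- by rewrite lee_fin.
- by apply: le_ereal_inf_tmp => _ [n _ <-]; rewrite lee_fin; exact: phi0.
- exact: ltW (gN w).
Qed.
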